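(* Consider the simplified FaRMv2 protocol described in the context. (1) In any invocation of GET\_TS, let $[L,U]$ be the interval returned by its call to TIME, let $\mathcal{R}(time)$ be the global time at which that call to TIME occurs, and let $\mathcal{R}(ret)$ be the global time at which GET\_TS returns. Then $L \le \mathcal{R}(time) \le U \le \mathcal{R}(ret)$. (2) Let $T$ be a committed read-write transaction with write timestamp $wts$. For every object $W$ in the write set of $T$, if $\mathcal{R}(\mathsf{lock}(W))$ denotes the global time at which the coordinator's lock of $W$ completes successfully, then $\mathcal{R}(\mathsf{lock}(W)) \le wts$.
   Context: Global time means the time at a distinguished clock master. Each machine has a local clock whose rate differs from that of global time by a relative factor of at most a known drift bound $\epsilon$. The function TIME() returns an interval $[L,U]$ such that the global time at the moment of the call lies in $[L,U]$. The function GET\_TS is: $[L,U] \gets \mathrm{TIME}()$; sleep for $(U-L)(1+\epsilon)$ units of local time; return $U$. The data consists of objects, each having a lock bit and a set of versions, each version tagged with a timestamp (the write timestamp of the transaction that wrote it). ReadAtTs$(R,ts)$: if $R$ is locked return NULL; otherwise return the version of $R$ with the highest timestamp $\le ts$, or NULL if none is available. LockAtTs$(R,ts)$: if $R$ is locked or $R$ has timestamp $\ge ts$ return NULL; otherwise lock $R$. A transaction with read set RSet and write set WSet executes ExecuteAndCommit(RSet, WSet): $rts \gets$ GET\_TS; for each $R\in$ RSet, if ReadAtTs$(R,rts)$ returns NULL then abort; if WSet is empty, commit (read-only transaction); otherwise for each $W\in$ WSet, if LockAtTs$(W,rts)$ returns NULL then abort; then $wts \gets$ GET\_TS (performed while holding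 the locks); then for each $R \in$ RSet $\setminus$ WSet, if $R$ is locked or $R$ has timestamp $> rts$, abort (validation failure); then install for each object in WSet a new version with timestamp $wts$, unlock all objects, and commit. Here $rts$ is the transaction's read timestamp and $wts$ its write timestamp. *)

From Stdlib Require Import Reals List.
Open Scope R_scope.

(* A local clock is a map C : global time -> local time.  Its rate differs
   from that of global time by a relative factor of at most eps. *)
Definition clock_ok (eps : R) (C : R -> R) : Prop :=
  forall t1 t2, t1 <= t2 ->
    (1 - eps) * (t2 - t1) <= C t2 - C t1 <= (1 + eps) * (t2 - t1).

(* One invocation of GET_TS, with the global times of its events:
   start of GET_TS, the call to TIME (which returns [L,U]), start and end
   of the sleep, and the return of GET_TS (which returns U). *)
Record getts_run := mkGetTs {
  gt_start : R;
  gt_time : R;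
  gt_L : R;
  gt_U : R;
  gt_sleep_start : R;
  gt_sleep_end : R;
  gt_ret : R
}.

Definition gt_result (g : getts_run) : R := gt_U g.

Definition getts_valid (eps : R) (C : R -> R) (g : getts_run) : Prop :=
  gt_start g <= gt_time g /\
  gt_time g <= gt_sleep_start g /\
  gt_sleep_start g <= gt_sleep_end g /\
  gt_sleep_end g <= gt_ret g /\
  (* specification of TIME(): global time of the call lies in [L,U] *)
  gt_L g <= gt_time g <= gt_U g /\
  C (gt_sleep_end g) - C (gt_sleep_start g) = (gt_U g - gt_L g) * (1 + eps).

Record obj_state := mkObj { locked : bool ; versions : list R }.

(* ReadAtTs(R, ts) does not return NULL *)
Definition read_ok (st : obj_state) (ts : R) : Prop :=
  locked st = false /\ exists v, In v (versions st) /\ v <= ts.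

(* LockAtTs(W, ts) succeeds: W unlocked and W has no timestamp >= ts *)
Definition lock_ok (st : obj_state) (ts : R) : Prop :=
  locked st = false /\ ~ (exists v, In v (versions st) /\ ts <= v).

(* validation of R succeeds: R unlocked and has no timestamp > rts *)
Definition valid_ok (st : obj_state) (rts : R) : Prop :=
  locked st = false /\ ~ (exists v, In v (versions st) /\ rts < v).

(* An execution of ExecuteAndCommit(RSet, WSet) by a coordinator,
   recorded by the global times of its steps. *)
Record rw_run (Obj : Type) := mkRW {
  RSet : list Obj;
  WSet : list Obj;
  rts_run : getts_run;
  read_time : Obj -> R;         (* completion of ReadAtTs(R, rts) *)
  lock_time : Obj -> R;         (* R(lock(W)): completion of LockAtTs(W, rts) *)
  wts_run : getts_run;          (* wts <- GET_TS, performed holding the locks *)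
  valid_time : Obj -> R;        (* validation of R in RSet \ WSet *)
  install_time : R              (* install versions, unlock, commit *)
}.
Arguments RSet {Obj}. Arguments WSet {Obj}. Arguments rts_run {Obj}.
Arguments read_time {Obj}. Arguments lock_time {Obj}. Arguments wts_run {Obj}.
Arguments valid_time {Obj}. Arguments install_time {Obj}.

Definition rts {Obj} (T : rw_run Obj) : R := gt_result (rts_run T).
Definition wts {Obj} (T : rw_run Obj) : R := gt_result (wts_run T).

(* T is a committed read-write transaction executed by a coordinator with
   local clock C; sigma t X is the state of object X seen by an operation on
   X completing at global time t.  Steps occur in program order. *)
Definition committed_rw {Obj : Type} (eps : R) (C : R -> R)
    (sigma : R -> Obj -> obj_state) (T : rw_run Obj) : Prop :=
  WSet T <> nil /\
  getts_valid eps C (rts_run T) /\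
  getts_valid eps C (wts_run T) /\
  (forall X, In X (RSet T) ->
     gt_ret (rts_run T) <= read_time T X /\
     read_ok (sigma (read_time T X) X) (rts T)) /\
  (forall X W, In X (RSet T) -> In W (WSet T) -> read_time T X <= lock_time T W) /\
  (forall W, In W (WSet T) ->
     gt_ret (rts_run T) <= lock_time T W /\
     lock_time T W <= gt_start (wts_run T) /\
     lock_ok (sigma (lock_time T W) W) (rts T)) /\
  (forall X, In X (RSet T) -> ~ In X (WSet T) ->
     gt_ret (wts_run T) <= valid_time T X /\
     valid_time T X <= install_time T /\
     valid_ok (sigma (valid_time T X) X) (rts T)) /\
  gt_ret (wts_run T) <= install_time T.

(* The call to TIME happens at some global time in [L, U].  The sleep that
   follows lasts (U - L)(1 + eps) units of local time, and since the local
   clock runs at most 1 + eps times as fast as global time, at least U - L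
   units of global time elapse; so GET_TS returns no earlier than
   L + (U - L) = U.  For the second part, every lock is taken before the
   GET_TS producing wts starts, hence before its call to TIME, whose global
   time is at most the returned upper bound U = wts. *)
From Stdlib Require Import Reals List Lra.
Open Scope R_scope.

Lemma getts_sleep_duration (eps : R) (C : R -> R) (g : getts_run) :
  -1 < eps -> clock_ok eps C -> getts_valid eps C g ->
  gt_U g - gt_L g <= gt_sleep_end g - gt_sleep_start g.
Proof.
  intros Heps HC (_ & _ & Hsleep & _ & _ & Hlocal).
  destruct (HC _ _ Hsleep) as [_ Hrate].
  rewrite Hlocal, Rmult_comm in Hrate.
  apply Rmult_le_reg_l with (1 + eps); lra.
Qed.

Lemma getts_time_bounds (eps : R) (C : R -> R) (g : getts_run) :
  getts_valid eps C g -> gt_L g <= gt_time g <= gt_U g.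
Proof. intros (_ & _ & _ & _ & Htime & _). exact Htime. Qed.

Lemma getts_U_le_ret (eps : R) (C : R -> R) (g : getts_run) :
  -1 < eps -> clock_ok eps C -> getts_valid eps C g -> gt_U g <= gt_ret g.
Proof.
  intros Heps HC Hg.
  pose proof (getts_sleep_duration eps C g Heps HC Hg) as Hsleep.
  pose proof (getts_time_bounds eps C g Hg) as Htime.
  destruct Hg as (_ & Hts & _ & Hret & _).
  lra.
Qed.

Lemma getts_start_le_result (eps : R) (C : R -> R) (g : getts_run) :
  getts_valid eps C g -> gt_start g <= gt_result g.
Proof.
  intros Hg.
  pose proof (getts_time_bounds eps C g Hg) as Htime.
  destruct Hg as (Hstart & _).
  unfold gt_result. lra.
Qed.

Lemma committed_lock_time_le_wts (Obj : Type) (eps : R) (C : R -> R)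
    (sigma : R -> Obj -> obj_state) (T : rw_run Obj) (W : Obj) :
  committed_rw eps C sigma T -> In W (WSet T) -> lock_time T W <= wts T.
Proof.
  intros (_ & _ & Hwts & _ & _ & Hlocks & _) HW.
  destruct (Hlocks W HW) as (_ & Hlock & _).
  pose proof (getts_start_le_result eps C _ Hwts).
  unfold wts. lra.
Qed.

Theorem lemma1 (eps : R) (heps : 0 <= eps) :
  (forall (C : R -> R) (g : getts_run),
     clock_ok eps C -> getts_valid eps C g ->
     gt_L g <= gt_time g /\ gt_time g <= gt_U g /\ gt_U g <= gt_ret g) /\
  (forall (Obj : Type) (C : R -> R) (sigma : R -> Obj -> obj_state)
          (T : rw_run Obj),
     clock_ok eps C -> committed_rw eps C sigma T ->
     forall W, In W (WSet T) -> lock_time T W <= wts T).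
Proof.
  assert (Heps : -1 < eps) by lra.
  split.
  - intros C g HC Hg.
    destruct (getts_time_bounds eps C g Hg) as [HL HU].
    repeat split; try assumption.
    exact (getts_U_le_ret eps C g Heps HC Hg).
  - intros Obj C sigma T _ HT W HW.
    exact (committed_lock_time_le_wts Obj eps C sigma T W HT HW).
Qed.
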